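(* Let $\mathfrak{stl}_3(R)^\sharp$ be the Leibniz algebra over $K$ generated by symbols $X^\sharp_{ij}(a)$ ($a\in R$, $1\le i\ne j\le 3$) and the $K$-module $\mathcal U$, subject to: $X^\sharp_{ij}$ is $K$-linear in $a$; $[X^\sharp_{ij}(a),X^\sharp_{jk}(b)]=-[X^\sharp_{jk}(b),X^\sharp_{ij}(a)]=X^\sharp_{ik}(ab)$ for distinct $i,j,k$; $[X^\sharp_{ij}(a),\mathcal U]=0=[\mathcal U,X^\sharp_{ij}(a)]$; $[X^\sharp_{ij}(a),X^\sharp_{ij}(b)]=0$; $[X^\sharp_{ij}(a),X^\sharp_{ik}(b)]=\mathrm{sign}(j,k)(\overline{ab})^{(i)}$ and $[X^\sharp_{ij}(a),X^\sharp_{kj}(b)]=\mathrm{sign}(i,k)(\overline{ab})^{(-j)}$ for distinct $i,j,k$. Let $\widehat{\mathfrak{stl}}_3(R)=\mathcal U\oplus\mathfrak{stl}_3(R)$ with bracket $[(c,x),(c',y)]=(\psi(x,y),[x,y])$. Then the unique Leibniz algebra homomorphism $\rho:\mathfrak{stl}_3(R)^\sharp\to\widehat{\mathfrak{stl}}_3(R)$ with $\rho(X^\sharp_{ij}(a))=(0,X_{ij}(a))$ and $\rho(u)=(u,0)$ for $u\in\mathcal U$ is an isomorphism.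
   Context: $K$ unital commutative ring, $R$ unital associative $K$-algebra, free as $K$-module with basis containing $1$. Leibniz algebra: $K$-bilinear bracket with $[x,[y,z]]=[[x,y],z]-[[x,z],y]$. $\mathfrak{stl}_3(R)$: Leibniz algebra over $K$ generated by $X_{ij}(a)$, $a\in R$, $1\le i\ne j\le 3$, subject to $K$-linearity in $a$, $[X_{ij}(a),X_{jk}(b)]=X_{ik}(ab)$ and $[X_{ij}(a),X_{ki}(b)]=-X_{kj}(ba)$ for distinct $i,j,k$, $[X_{ij}(a),X_{kl}(b)]=0$ for $j\ne k$, $i\ne l$. $H$ is the $K$-span of all $[X_{ij}(a),X_{ji}(b)]$; $\mathfrak{stl}_3(R)=H\oplus\bigoplus_{i\ne j}X_{ij}(R)$ with $a\mapsto X_{ij}(a)$ injective. $R_3=R/(3R+R[R,R])$, $\bar a$ the class of $a$. $\mathcal U=R_3^6$ with coordinates indexed by $\{1,2,3,-1,-2,-3\}$; $\bar a^{(m)}$ is the element with coordinate $\bar a$ at index $m$, $0$ elsewhere. $\mathrm{sign}(m,n)=1$ if $m<n$, $-1$ if $m>n$. $\psi$ is the $K$-bilinear map with $\psi(X_{ij}(a),X_{ik}(b))=\mathrm{sign}(j,k)(\overline{ab})^{(i)}$, $\psi(X_{ij}(a),X_{kj}(b))=\mathrm{sign}(i,k)(\overline{ab})^{(-j)}$ for distinct $i,j,k$, $\psi=0$ on all other pairs $X_{ij}(a),X_{kl}(b)$ and whenever an argument lies in $H$; it is a Leibniz 2-cocycle. *)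

From HB Require Import structures.
From mathcomp Require Import all_boot all_order all_algebra.
Set Implicit Arguments. Unset Strict Implicit. Unset Printing Implicit Defensive.
Import GRing.Theory.
Local Open Scope ring_scope.

Section LeibnizDefs.
Variable K : comPzRingType.

Definition klinear (V W : lmodType K) (f : V -> W) :=
  forall (k : K) (x y : V), f (k *: x + y) = k *: f x + f y.

Definition kbilinear (V W : lmodType K) (br : V -> V -> W) :=
  (forall k x y z, br (k *: x + y) z = k *: br x z + br y z) /\
  (forall k x y z, br x (k *: y + z) = k *: br x y + br x z).

Definition leibniz (L : lmodType K) (br : L -> L -> L) :=
  kbilinear br /\ forall x y z, br x (br y z) = br (br x y) z - br (br x z) y.

Definition leibniz_hom (L M : lmodType K) (brL : L -> L -> L) (brM : M -> M -> M)
  (f : L -> M) := klinear f /\ forall x y, f (brL x y) = brM (f x) (f y).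

(* indices 1,2,3 are represented by 'I_3 = {0,1,2} (order preserved) *)
Definition distinct3 (i j k : 'I_3) := [&& i != j, j != k & i != k].

Definition free_with_one (R : algType K) :=
  exists (I : eqType) (e : I -> R) (i1 : I), e i1 = 1 /\
   (forall (s : seq I) (c : I -> K), uniq s ->
       \sum_(i <- s) c i *: e i = 0 -> forall i, i \in s -> c i = 0) /\
   (forall x : R, exists (s : seq I) (c : I -> K), x = \sum_(i <- s) c i *: e i).

(* x lies in 3R + R[R,R] *)
Definition in_ideal3 (R : algType K) (x : R) :=
  exists (r0 : R) (l : seq (R * R * R)),
    x = r0 *+ 3 + \sum_(p <- l) p.1.1 * (p.1.2 * p.2 - p.2 * p.1.2).

(* (Q, pi) is the quotient R_3 = R/(3R + R[R,R]) with pi a = class of a *)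
Definition is_R3 (R : algType K) (Q : lmodType K) (pi : R -> Q) :=
  klinear pi /\ (forall q : Q, exists a, pi a = q) /\
  (forall a, pi a = 0 <-> in_ideal3 a).

(* coordinate index of U = R_3^6: (true,i) is index i, (false,j) is index -j *)
Definition Uidx := (bool * 'I_3)%type.

Definition unitU (R : algType K) (Q : lmodType K) (pi : R -> Q) (a : R) (m : Uidx)
  : {ffun Uidx -> Q} := [ffun p => if p == m then pi a else 0].

Definition sgn (V : zmodType) (m n : 'I_3) (u : V) : V := if (m < n)%N then u else - u.

Definition stl_rels (R : algType K) (M : lmodType K) (br : M -> M -> M)
  (Y : 'I_3 -> 'I_3 -> R -> M) :=
  (forall i j, i != j -> klinear (Y i j)) /\
  (forall i j k a b, distinct3 i j k -> br (Y i j a) (Y j k b) = Y i k (a * b)) /\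
  (forall i j k a b, distinct3 i j k -> br (Y i j a) (Y k i b) = - Y k j (b * a)) /\
  (forall i j k l a b, i != j -> k != l -> j != k -> i != l ->
      br (Y i j a) (Y k l b) = 0).

Definition is_stl3 (R : algType K) (L : lmodType K) (br : L -> L -> L)
  (X : 'I_3 -> 'I_3 -> R -> L) :=
  leibniz br /\ stl_rels br X /\
  forall (M : lmodType K) (brM : M -> M -> M) (Y : 'I_3 -> 'I_3 -> R -> M),
    leibniz brM -> stl_rels brM Y ->
    exists f : L -> M, (leibniz_hom br brM f /\ forall i j a, i != j -> f (X i j a) = Y i j a)
      /\ forall g : L -> M, leibniz_hom br brM g ->
           (forall i j a, i != j -> g (X i j a) = Y i j a) -> forall x, g x = f x.

(* defining relations of stl_3(R)^sharp; kap is the image of the generating module U *)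
Definition stlsharp_rels (R : algType K) (Q : lmodType K) (pi : R -> Q)
  (M : lmodType K) (br : M -> M -> M) (Y : 'I_3 -> 'I_3 -> R -> M)
  (kap : {ffun Uidx -> Q} -> M) :=
  (forall i j, i != j -> klinear (Y i j)) /\ klinear kap /\
  (forall i j k a b, distinct3 i j k ->
      br (Y i j a) (Y j k b) = Y i k (a * b) /\ br (Y j k b) (Y i j a) = - Y i k (a * b)) /\
  (forall i j a u, i != j -> br (Y i j a) (kap u) = 0 /\ br (kap u) (Y i j a) = 0) /\
  (forall i j a b, i != j -> br (Y i j a) (Y i j b) = 0) /\
  (forall i j k a b, distinct3 i j k ->
      br (Y i j a) (Y i k b) = kap (sgn j k (unitU pi (a * b) (true, i)))) /\
  (forall i j k a b, distinct3 i j k ->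
      br (Y i j a) (Y k j b) = kap (sgn i k (unitU pi (a * b) (false, j)))).

Definition is_stl3sharp (R : algType K) (Q : lmodType K) (pi : R -> Q)
  (S : lmodType K) (br : S -> S -> S) (Xs : 'I_3 -> 'I_3 -> R -> S)
  (iota : {ffun Uidx -> Q} -> S) :=
  leibniz br /\ stlsharp_rels pi br Xs iota /\
  forall (M : lmodType K) (brM : M -> M -> M) (Y : 'I_3 -> 'I_3 -> R -> M)
         (kap : {ffun Uidx -> Q} -> M),
    leibniz brM -> stlsharp_rels pi brM Y kap ->
    exists f : S -> M,
      (leibniz_hom br brM f /\ (forall i j a, i != j -> f (Xs i j a) = Y i j a)
        /\ forall u, f (iota u) = kap u)
      /\ forall g : S -> M, leibniz_hom br brM g ->
           (forall i j a, i != j -> g (Xs i j a) = Y i j a) ->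
           (forall u, g (iota u) = kap u) -> forall x, g x = f x.

(* the cocycle psi : stl_3(R) x stl_3(R) -> U, as described in the context
   (bilinear, given values on generator pairs, zero on H), plus the stated
   Leibniz 2-cocycle identity (central, trivial action) *)
Definition is_psi (R : algType K) (L : lmodType K) (br : L -> L -> L)
  (X : 'I_3 -> 'I_3 -> R -> L) (Q : lmodType K) (pi : R -> Q)
  (psi : L -> L -> {ffun Uidx -> Q}) :=
  kbilinear psi /\
  (forall i j k a b, distinct3 i j k ->
      psi (X i j a) (X i k b) = sgn j k (unitU pi (a * b) (true, i))) /\
  (forall i j k a b, distinct3 i j k ->
      psi (X i j a) (X k j b) = sgn i k (unitU pi (a * b) (false, j))) /\
  (forall i j k l a b, i != j -> k != l ->
      ~~ ((i == k) && (j != l)) -> ~~ ((j == l) && (i != k)) ->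
      psi (X i j a) (X k l b) = 0) /\
  (forall i j a b y, i != j ->
      psi (br (X i j a) (X j i b)) y = 0 /\ psi y (br (X i j a) (X j i b)) = 0) /\
  (forall x y z, psi x (br y z) = psi (br x y) z - psi (br x z) y).

Definition hatbr (L : lmodType K) (Q : lmodType K) (br : L -> L -> L)
  (psi : L -> L -> {ffun Uidx -> Q})
  (p q : ({ffun Uidx -> Q} * L)%type) : ({ffun Uidx -> Q} * L)%type :=
  (psi p.2 q.2, br p.2 q.2).

Definition rho_spec (R : algType K) (Q : lmodType K) (L S : lmodType K)
  (brL : L -> L -> L) (X : 'I_3 -> 'I_3 -> R -> L) (psi : L -> L -> {ffun Uidx -> Q})
  (brS : S -> S -> S) (Xs : 'I_3 -> 'I_3 -> R -> S) (iota : {ffun Uidx -> Q} -> S)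
  (rho : S -> ({ffun Uidx -> Q} * L)%type) :=
  leibniz_hom brS (hatbr brL psi) rho /\
  (forall i j a, i != j -> rho (Xs i j a) = (0, X i j a)) /\
  (forall u, rho (iota u) = (u, 0)).

End LeibnizDefs.

(* The relations of stl_3(R)^# hold in the central extension U (+) stl_3(R), since
   psi is a cocycle with the prescribed values on generators; this gives rho.
   For the inverse, iota(U) is central in stl_3(R)^#: each iota(abar^(m)) is a
   bracket of two generators, hence brackets trivially with iota(U), and right
   (left) multiplication by an element of iota(U) vanishes on the generators.
   Twisting the bracket of stl_3(R)^# by -iota o psi o rho then gives a Leibniz
   algebra satisfying the relations of stl_3(R), whence a homomorphism phi with
   rho o phi = (0, id), and (u, x) |-> iota u + phi x inverts rho; every identity
   between homomorphisms is checked on generators. *)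

From HB Require Import structures.
From mathcomp Require Import all_boot all_order all_algebra.
Import GRing.Theory.
Local Open Scope ring_scope.
Set Implicit Arguments. Unset Strict Implicit. Unset Printing Implicit Defensive.

Section KLinear.
Variables (K : comPzRingType) (V W : lmodType K) (f : V -> W).
Hypothesis hf : klinear f.

Lemma klinear0 : f 0 = 0.
Proof.
have := hf 1 0 0; rewrite scaler0 add0r scale1r => f0.
by apply: (@addrI _ (f 0)); rewrite addr0 -f0.
Qed.

Lemma klinearD x y : f (x + y) = f x + f y.
Proof. by rewrite -[x]scale1r hf !scale1r. Qed.

Lemma klinearZ k x : f (k *: x) = k *: f x.
Proof. by rewrite -[k *: x]addr0 hf klinear0 addr0. Qed.

Lemma klinearN x : f (- x) = - f x.
Proof. by rewrite -scaleN1r klinearZ scaleN1r. Qed.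

Lemma klinearB x y : f (x - y) = f x - f y.
Proof. by rewrite klinearD klinearN. Qed.

Lemma klinear_sum (I : Type) (s : seq I) (F : I -> V) :
  f (\sum_(i <- s) F i) = \sum_(i <- s) f (F i).
Proof.
elim: s => [|x s IHs]; first by rewrite !big_nil klinear0.
by rewrite !big_cons klinearD IHs.
Qed.

End KLinear.

Lemma klinear_zero (K : comPzRingType) (V W : lmodType K) : klinear (fun _ : V => 0 : W).
Proof. by move=> *; rewrite scaler0 addr0. Qed.

Section KBilinear.
Variables (K : comPzRingType) (V W : lmodType K) (br : V -> V -> W).
Hypothesis hb : kbilinear br.

Lemma kbilinear_l z : klinear (br^~ z). Proof. by move=> k x y; apply: hb.1. Qed.
Lemma kbilinear_r x : klinear (br x). Proof. by move=> k y z; apply: hb.2. Qed.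

Lemma br0l z : br 0 z = 0. Proof. exact (klinear0 (kbilinear_l z)). Qed.
Lemma br0r x : br x 0 = 0. Proof. exact (klinear0 (kbilinear_r x)). Qed.
Lemma brDl x y z : br (x + y) z = br x z + br y z.
Proof. exact (klinearD (kbilinear_l z) _ _). Qed.
Lemma brDr x y z : br x (y + z) = br x y + br x z.
Proof. exact (klinearD (kbilinear_r x) _ _). Qed.
Lemma brBl x y z : br (x - y) z = br x z - br y z.
Proof. exact (klinearB (kbilinear_l z) _ _). Qed.
Lemma brBr x y z : br x (y - z) = br x y - br x z.
Proof. exact (klinearB (kbilinear_r x) _ _). Qed.
Lemma brZl k x z : br (k *: x) z = k *: br x z.
Proof. exact (klinearZ (kbilinear_l z) _ _). Qed.
Lemma brZr k x z : br x (k *: z) = k *: br x z.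
Proof. exact (klinearZ (kbilinear_r x) _ _). Qed.
Lemma br_suml (I : Type) (s : seq I) (F : I -> V) z :
  br (\sum_(i <- s) F i) z = \sum_(i <- s) br (F i) z.
Proof. exact (klinear_sum (kbilinear_l z) s F). Qed.

End KBilinear.

Lemma leibnizA (K : comPzRingType) (V : lmodType K) (br : V -> V -> V) :
  leibniz br -> forall x y z, br (br x y) z = br x (br y z) + br (br x z) y.
Proof. by move=> [_ hJ] x y z; rewrite hJ subrK. Qed.

(* The graph x |-> (x, D x) of a linear map D is a homomorphism into [V * V]
   with [rext_br] (resp. [lext_br]) when D [x, y] = [D x, y] + [x, D y]
   (resp. D [x, y] = [D x, y] - [D y, x]); right (resp. left) multiplication by
   a fixed element is such a map, so by uniqueness on a presented algebra it
   vanishes as soon as it vanishes on the generators. *)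
Section SquareZeroExtensions.
Variables (K : comPzRingType) (V : lmodType K) (br : V -> V -> V).
Hypothesis hV : leibniz br.

Definition rext_br (p q : V * V) : V * V := (br p.1 q.1, br p.2 q.1 + br p.1 q.2).
Definition lext_br (p q : V * V) : V * V := (br p.1 q.1, br p.2 q.1 - br q.2 p.1).

Let hb := hV.1.

Lemma leibniz_rext_br : leibniz rext_br.
Proof.
split; first split.
- move=> k x y z; rewrite /rext_br /=; congr pair; first exact: hb.1.
  by rewrite !hb.1 /= scalerDr addrACA.
- move=> k x y z; rewrite /rext_br /=; congr pair; first exact: hb.2.
  by rewrite !hb.2 /= scalerDr addrACA.
move=> [a b] [a' b'] [a'' b'']; rewrite /rext_br /=; congr pair; first exact: hV.2.
rewrite !(brDl hb) !(brDr hb) (hV.2 b a' a'') (hV.2 a b' a'') (hV.2 a a' b'').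
by rewrite /= !opprD !addrA [LHS](ACl (1*3*5*2*6*4)).
Qed.

Lemma leibniz_lext_br : leibniz lext_br.
Proof.
split; first split.
- move=> k x y z; rewrite /lext_br /=; congr pair; first exact: hb.1.
  by rewrite hb.1 (brDr hb) (brZr hb) /= scalerBr opprD addrACA.
- move=> k x y z; rewrite /lext_br /=; congr pair; first exact: hb.2.
  by rewrite hb.2 (brDl hb) (brZl hb) /= scalerBr opprD addrACA.
move=> [a b] [a' b'] [a'' b'']; rewrite /lext_br /=; congr pair; first exact: hV.2.
rewrite !(brBl hb) (hV.2 b a' a'') (hV.2 b'' a a') (hV.2 b' a a'').
by rewrite /= !(opprB, opprD, opprK, addrA) [RHS](ACl (1*8*3*6*(2*5)*(4*7))) /= !addNr !addr0.
Qed.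

Lemma rext_graph_hom D : klinear D ->
  (forall x y, D (br x y) = br (D x) y + br x (D y)) ->
  leibniz_hom br rext_br (fun x => (x, D x)).
Proof. by move=> hD dD; split=> [k x y|x y]; rewrite /rext_br ?hD ?dD. Qed.

Lemma lext_graph_hom D : klinear D ->
  (forall x y, D (br x y) = br (D x) y - br (D y) x) ->
  leibniz_hom br lext_br (fun x => (x, D x)).
Proof. by move=> hD dD; split=> [k x y|x y]; rewrite /lext_br ?hD ?dD. Qed.

End SquareZeroExtensions.

Lemma ord3_other_two (i : 'I_3) :
  exists j k : 'I_3, [/\ i != j, i != k, j != k & (j < k)%N].
Proof.
case: i => [[|[|[|//]]] lti].
- by exists (@Ordinal 3 1 isT), (@Ordinal 3 2 isT).
- by exists (@Ordinal 3 0 isT), (@Ordinal 3 2 isT).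
- by exists (@Ordinal 3 0 isT), (@Ordinal 3 1 isT).
Qed.

Lemma ord3_no_four (i j k l : 'I_3) :
  i != j -> i != k -> i != l -> j != k -> j != l -> k != l -> False.
Proof.
by move: i j k l => [[|[|[|?]]] ?] [[|[|[|?]]] ?] [[|[|[|?]]] ?] [[|[|[|?]]] ?].
Qed.

Section Stl3.
Variables (K : comPzRingType) (R : algType K) (L : lmodType K) (brL : L -> L -> L).
Variable X : 'I_3 -> 'I_3 -> R -> L.

Lemma stl_rels_hom (M : lmodType K) (brM : M -> M -> M) (e : L -> M) :
  leibniz_hom brL brM e -> stl_rels brL X -> stl_rels brM (fun i j a => e (X i j a)).
Proof.
move=> [he hm] [hX [hXX [hXX' hXX0]]].
split; [|split; [|split]].
- by move=> i j hij k a b /=; rewrite hX // he.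
- by move=> i j k a b hd; rewrite -hm hXX.
- by move=> i j k a b hd; rewrite -hm hXX' // (klinearN he).
- by move=> i j k l a b *; rewrite -hm hXX0 // (klinear0 he).
Qed.

Hypothesis hL : is_stl3 brL X.

Lemma stl3_hom_eq (M : lmodType K) (brM : M -> M -> M) (e g : L -> M) :
  leibniz brM -> leibniz_hom brL brM e -> leibniz_hom brL brM g ->
  (forall i j a, i != j -> g (X i j a) = e (X i j a)) -> g =1 e.
Proof.
move=> hM he hg gXe x; have [_ [hrels huniv]] := hL.
have [f [_ f_uniq]] := huniv M brM _ hM (stl_rels_hom he hrels).
by rewrite (f_uniq g) // (f_uniq e).
Qed.

End Stl3.

Section Stl3Sharp.
Variables (K : comPzRingType) (R : algType K) (Q : lmodType K) (pi : R -> Q).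
Variables (S : lmodType K) (brS : S -> S -> S).
Variables (Xs : 'I_3 -> 'I_3 -> R -> S) (iota : {ffun Uidx -> Q} -> S).

Lemma stlsharp_rels_hom (M : lmodType K) (brM : M -> M -> M) (e : S -> M) :
  leibniz_hom brS brM e -> stlsharp_rels pi brS Xs iota ->
  stlsharp_rels pi brM (fun i j a => e (Xs i j a)) (fun u => e (iota u)).
Proof.
move=> [he hm] [hX [hi [hXX [hXi [hXsq [hXi' hXj']]]]]].
split; [|split; [|split; [|split; [|split; [|split]]]]].
- by move=> i j hij k a b /=; rewrite hX // he.
- by move=> k u v /=; rewrite hi he.
- move=> i j k a b hd; rewrite -!hm.
  by have [-> ->] := hXX i j k a b hd; rewrite (klinearN he).
- by move=> i j a u hij; rewrite -!hm; have [-> ->] := hXi i j a u hij; rewrite (klinear0 he).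
- by move=> i j a b hij; rewrite -hm hXsq // (klinear0 he).
- by move=> i j k a b hd; rewrite -hm hXi'.
- by move=> i j k a b hd; rewrite -hm hXj'.
Qed.

Hypothesis hS : is_stl3sharp pi brS Xs iota.

Lemma stl3sharp_hom_eq (M : lmodType K) (brM : M -> M -> M) (e g : S -> M) :
  leibniz brM -> leibniz_hom brS brM e -> leibniz_hom brS brM g ->
  (forall i j a, i != j -> g (Xs i j a) = e (Xs i j a)) ->
  (forall u, g (iota u) = e (iota u)) -> g =1 e.
Proof.
move=> hM he hg gXe giotae x; have [_ [hrels huniv]] := hS.
have [f [_ f_uniq]] := huniv M brM _ _ hM (stlsharp_rels_hom he hrels).
by rewrite (f_uniq g) // (f_uniq e).
Qed.

Let hSl := hS.1.
Let hSb := hS.1.1.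

Lemma stl3sharp_rann c :
  (forall i j a, i != j -> brS (Xs i j a) c = 0) -> (forall u, brS (iota u) c = 0) ->
  forall x, brS x c = 0.
Proof.
move=> hXc hic x.
have zero_hom : leibniz_hom brS (rext_br brS) (fun x => (x, 0)).
  apply: rext_graph_hom => [|y z]; first exact: klinear_zero.
  by rewrite (br0l hSb) (br0r hSb) addr0.
have rmul_hom : leibniz_hom brS (rext_br brS) (fun x => (x, brS x c)).
  by apply: rext_graph_hom => [|y z]; [apply: kbilinear_l | rewrite (leibnizA hSl) addrC].
suff /(congr1 snd) : (x, brS x c) = (x, 0) by [].
by apply: (stl3sharp_hom_eq (leibniz_rext_br hSl) zero_hom rmul_hom) => [i j a hij|u];
  rewrite ?hXc ?hic.
Qed.

Lemma stl3sharp_lann c :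
  (forall i j a, i != j -> brS c (Xs i j a) = 0) -> (forall u, brS c (iota u) = 0) ->
  forall x, brS c x = 0.
Proof.
move=> hcX hci x.
have zero_hom : leibniz_hom brS (lext_br brS) (fun x => (x, 0)).
  apply: lext_graph_hom => [|y z]; first exact: klinear_zero.
  by rewrite !(br0l hSb) subr0.
have lmul_hom : leibniz_hom brS (lext_br brS) (fun x => (x, brS c x)).
  by apply: lext_graph_hom => [|y z]; [apply: kbilinear_r | apply: hSl.2].
suff /(congr1 snd) : (x, brS c x) = (x, 0) by [].
by apply: (stl3sharp_hom_eq (leibniz_lext_br hSl) zero_hom lmul_hom) => [i j a hij|u];
  rewrite ?hcX ?hci.
Qed.

Lemma iota_unitU_bracket a m : exists i j k l,
  [/\ i != j, k != l & iota (unitU pi a m) = brS (Xs i j a) (Xs k l 1)].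
Proof.
have [_ [_ [_ [_ [_ [hXi' hXj']]]]]] := hS.2.1.
case: m => [[] i]; have [j [k [ij ik jk ltjk]]] := ord3_other_two i.
- exists i, j, i, k; split=> //.
  by rewrite hXi' ?mulr1 /sgn ?ltjk // /distinct3 ij jk ik.
- exists j, i, k, i; split; [by rewrite eq_sym | by rewrite eq_sym |].
  by rewrite hXj' ?mulr1 /sgn ?ltjk // /distinct3 eq_sym ij ik jk.
Qed.

Hypothesis pi_surj : forall q : Q, exists a, pi a = q.

Lemma iota_bracket_iota u v : brS (iota u) (iota v) = 0.
Proof.
have [_ [hi [_ [hXi _]]]] := hS.2.1.
have -> : u = \sum_(m : Uidx) [ffun p => if p == m then u m else 0].
  apply/ffunP => p; rewrite sum_ffunE (bigD1 p) //= ffunE eqxx big1 ?addr0 //.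
  by move=> m hm; rewrite ffunE eq_sym (negbTE hm).
rewrite (klinear_sum hi) (br_suml hSb) big1 // => m _.
have [a <-] := pi_surj (u m).
have [i [j [k [l [ij kl ->]]]]] := iota_unitU_bracket a m.
by rewrite (leibnizA hSl) (hXi _ _ _ _ kl).1 (hXi _ _ _ _ ij).1 (br0r hSb) (br0l hSb) addr0.
Qed.

Lemma iota_rcentral u x : brS x (iota u) = 0.
Proof.
have [_ [_ [_ [hXi _]]]] := hS.2.1.
apply: stl3sharp_rann => [i j a ij|v]; last exact: iota_bracket_iota.
exact: (hXi _ _ _ _ ij).1.
Qed.

Lemma iota_lcentral u x : brS (iota u) x = 0.
Proof.
have [_ [_ [_ [hXi _]]]] := hS.2.1.
apply: stl3sharp_lann => [i j a ij|v]; last exact: iota_bracket_iota.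
exact: (hXi _ _ _ _ ij).2.
Qed.

End Stl3Sharp.

Section CentralExtension.
Variables (K : comPzRingType) (R : algType K) (Q : lmodType K) (pi : R -> Q).
Variables (L : lmodType K) (brL : L -> L -> L) (X : 'I_3 -> 'I_3 -> R -> L).
Variable psi : L -> L -> {ffun Uidx -> Q}.

Lemma leibniz_hatbr : leibniz brL -> kbilinear psi ->
  (forall x y z, psi x (brL y z) = psi (brL x y) z - psi (brL x z) y) ->
  leibniz (hatbr brL psi).
Proof.
move=> [[hl hr] hJ] [pl pr] pJ; split; first split.
- by move=> k x y z; rewrite /hatbr /= hl pl.
- by move=> k x y z; rewrite /hatbr /= hr pr.
- by move=> x y z; rewrite /hatbr /= hJ pJ.
Qed.

Lemma hatbr_stlsharp_rels : kbilinear brL -> stl_rels brL X -> is_psi brL X pi psi ->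
  stlsharp_rels pi (hatbr brL psi) (fun i j a => (0, X i j a)) (fun u => (u, 0)).
Proof.
move=> hLb [hX [hXX [hXX' hXX0]]] [hpb [psi_i [psi_j [psi0 _]]]].
split; [|split; [|split; [|split; [|split; [|split]]]]].
- move=> i j hij k a b; apply: injective_projections => /=; last exact: hX.
  by rewrite scaler0 addr0.
- by move=> k u v; apply: injective_projections => /=; rewrite ?scaler0 ?addr0.
- move=> i j k a b hd; have /and3P[ij jk ik] := hd.
  have ji : j != i by rewrite eq_sym.
  have kj : k != j by rewrite eq_sym.
  rewrite /hatbr /=; split; apply: injective_projections => /=; rewrite ?oppr0.
  + by apply: psi0; rewrite ?(negbTE ij) ?(negbTE jk).
  + exact: hXX.
  + by apply: psi0; rewrite ?(negbTE ji) ?(negbTE kj).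
  + by apply: hXX'; rewrite /distinct3 jk ji eq_sym ik.
- move=> i j a u hij; rewrite /hatbr /=.
  split; apply: injective_projections => /=;
    by rewrite ?(br0r hpb) ?(br0r hLb) ?(br0l hpb) ?(br0l hLb).
- move=> i j a b hij; rewrite /hatbr /=; apply: injective_projections => /=.
  + by apply: psi0; rewrite ?eqxx.
  + by apply: hXX0 => //; rewrite eq_sym.
- move=> i j k a b hd; have /and3P[ij jk ik] := hd.
  rewrite /hatbr /=; apply: injective_projections => /=; first exact: psi_i.
  by apply: hXX0 => //; rewrite eq_sym.
- move=> i j k a b hd; have /and3P[ij jk ik] := hd.
  rewrite /hatbr /=; apply: injective_projections => /=; first exact: psi_j.
  by apply: hXX0 => //; rewrite eq_sym.
Qed.

End CentralExtension.

Section Inverse.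
Variables (K : comPzRingType) (R : algType K) (Q : lmodType K) (pi : R -> Q).
Variables (L : lmodType K) (brL : L -> L -> L) (X : 'I_3 -> 'I_3 -> R -> L).
Variable psi : L -> L -> {ffun Uidx -> Q}.
Variables (S : lmodType K) (brS : S -> S -> S).
Variables (Xs : 'I_3 -> 'I_3 -> R -> S) (iota : {ffun Uidx -> Q} -> S).
Variable rho : S -> ({ffun Uidx -> Q} * L)%type.
Hypotheses (pi_surj : forall q : Q, exists a, pi a = q) (hL : is_stl3 brL X).
Hypotheses (hpsi : is_psi brL X pi psi) (hS : is_stl3sharp pi brS Xs iota).
Hypothesis hrho : rho_spec brL X psi brS Xs iota rho.

(* rho sends this bracket to the bracket of stl_3(R) in the second component,
   so the presentation of stl_3(R) yields a section phi of rho. *)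
Definition twisted_br (x y : S) : S := brS x y - iota (psi (rho x).2 (rho y).2).

Let hSb := hS.1.1.
Let hi := hS.2.1.2.1.
Let rho_lin := hrho.1.1.
Let rho_br := hrho.1.2.
Let rhoX := hrho.2.1.
Let rho_iota := hrho.2.2.
Let iota_r := iota_rcentral hS pi_surj.
Let iota_l := iota_lcentral hS pi_surj.

Lemma rho_twisted_br x y : rho (twisted_br x y) = (0, brL (rho x).2 (rho y).2).
Proof.
rewrite (klinearB rho_lin) rho_br rho_iota.
by apply: injective_projections; rewrite /= ?subrr ?subr0.
Qed.

Lemma leibniz_twisted_br : leibniz twisted_br.
Proof.
have [hpb [_ [_ [_ [_ hpJ]]]]] := hpsi.
split; first split.
- move=> k x y z; rewrite /twisted_br hSb.1 rho_lin /= hpb.1 hi.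
  by rewrite scalerBr opprD addrACA.
- move=> k x y z; rewrite /twisted_br hSb.2 rho_lin /= hpb.2 hi.
  by rewrite scalerBr opprD addrACA.
move=> x y z; rewrite /twisted_br !rho_twisted_br /=.
rewrite (brBr hSb) !(brBl hSb) !iota_r !iota_l !subr0 hS.1.2 hpJ (klinearB hi).
by rewrite !opprB !addrA [LHS](ACl (1*4*3*2)).
Qed.

Lemma twisted_br_stl_rels : stl_rels twisted_br Xs.
Proof.
have [hX [_ [hXX [_ [hXsq [hXi' hXj']]]]]] := hS.2.1.
have [_ [psi_i [psi_j [psi0 _]]]] := hpsi.
split; [exact: hX | split; [|split]].
- move=> i j k a b hd; have /and3P[ij jk ik] := hd.
  rewrite /twisted_br (hXX i j k a b hd).1 !rhoX //= psi0 ?(klinear0 hi) ?subr0 //.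
  + by rewrite (negbTE ij).
  + by rewrite (negbTE jk).
- move=> i j k a b hd; have /and3P[ij jk ik] := hd.
  have ki : k != i by rewrite eq_sym.
  have hd' : distinct3 k i j by rewrite /distinct3 ij ki (eq_sym k j) jk.
  rewrite /twisted_br (hXX k i j b a hd').2 !rhoX //= psi0 ?(klinear0 hi) ?subr0 //.
  + by rewrite (negbTE ik).
  + by rewrite eq_sym (negbTE ij).
- move=> i j k l a b ij kl jk il; rewrite /twisted_br !rhoX //=.
  case: (eqVneq i k) => [<-|ik]; case: (eqVneq j l) => [<-|jl].
  + by rewrite hXsq // psi0 ?eqxx // (klinear0 hi) subrr.
  + have hd : distinct3 i j l by rewrite /distinct3 ij jl.
    by rewrite (hXi' _ _ _ _ _ hd) (psi_i _ _ _ _ _ hd) subrr.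
  + have hd : distinct3 i j k by rewrite /distinct3 ij jk.
    by rewrite (hXj' _ _ _ _ _ hd) (psi_j _ _ _ _ _ hd) subrr.
  + by case: (ord3_no_four ij ik il jk jl kl).
Qed.

Section Splitting.
Variable phi : L -> S.
Hypothesis phi_hom : leibniz_hom brL twisted_br phi.
Hypothesis phiX : forall i j a, i != j -> phi (X i j a) = Xs i j a.

Lemma rho_phi x : rho (phi x) = (0, x).
Proof.
have hat0 : leibniz (hatbr brL (fun _ _ => 0 : {ffun Uidx -> Q})).
  apply: leibniz_hatbr; first exact: hL.1.
    by split=> *; rewrite scaler0 addr0.
  by move=> *; rewrite subrr.
move: x; apply: (stl3_hom_eq hL hat0 (e := fun x => (0, x)) (g := rho \o phi))
  => [|| i j a ij] /=.
- split=> [k y z|y z] //.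
  by apply: injective_projections; rewrite /= ?scaler0 ?addr0.
- by split=> [k y z|y z] /=; rewrite ?phi_hom.1 ?rho_lin // phi_hom.2 rho_twisted_br.
- by rewrite phiX // rhoX.
Qed.

Definition rho_inv (p : {ffun Uidx -> Q} * L) : S := iota p.1 + phi p.2.

Lemma rho_invK : cancel rho_inv rho.
Proof.
move=> [u x]; rewrite /rho_inv (klinearD rho_lin) rho_iota rho_phi /=.
by apply: injective_projections; rewrite /= ?addr0 ?add0r.
Qed.

Lemma rhoK : cancel rho rho_inv.
Proof.
apply: (stl3sharp_hom_eq hS hS.1 (e := id) (g := rho_inv \o rho)) => [|| i j a ij | u] //=.
- split=> [k x y|x y].
    by rewrite /= /rho_inv rho_lin /= hi phi_hom.1 scalerDr addrACA.
  rewrite /= /rho_inv rho_br /= phi_hom.2 /twisted_br !rho_phi /=.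
  by rewrite (brDl hSb) !(brDr hSb) !iota_l !iota_r !add0r addrC subrK.
- by rewrite /rho_inv rhoX //= (klinear0 hi) phiX // add0r.
- by rewrite /rho_inv rho_iota /= (klinear0 phi_hom.1) addr0.
Qed.

End Splitting.

Lemma rho_bijective : bijective rho.
Proof.
have [phi [[phi_hom phiX] _]] := hL.2.2 S twisted_br Xs leibniz_twisted_br twisted_br_stl_rels.
by exists (rho_inv phi); [exact: rhoK | exact: rho_invK].
Qed.

End Inverse.

Unset Implicit Arguments. Set Strict Implicit.

Theorem lemma4p3 (K : comPzRingType) (R : algType K) (hR : free_with_one R)
  (Q : lmodType K) (pi : R -> Q) (hQ : is_R3 pi)
  (L : lmodType K) (brL : L -> L -> L) (X : 'I_3 -> 'I_3 -> R -> L)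
  (hL : is_stl3 brL X)
  (psi : L -> L -> {ffun Uidx -> Q}) (hpsi : is_psi brL X pi psi)
  (S : lmodType K) (brS : S -> S -> S) (Xs : 'I_3 -> 'I_3 -> R -> S)
  (iota : {ffun Uidx -> Q} -> S) (hS : is_stl3sharp pi brS Xs iota) :
  exists rho : S -> ({ffun Uidx -> Q} * L)%type,
    rho_spec brL X psi brS Xs iota rho /\
    (forall rho', rho_spec brL X psi brS Xs iota rho' -> forall x, rho' x = rho x) /\
    bijective rho.
Proof.
have [_ [_ hSuniv]] := hS.
have [hpb [_ [_ [_ [_ hpJ]]]]] := hpsi.
have hat := leibniz_hatbr hL.1 hpb hpJ.
have rels := hatbr_stlsharp_rels hL.1.1 hL.2.1 hpsi.
have [rho [spec rho_uniq]] := hSuniv _ _ _ _ hat rels.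
exists rho; split=> //; split.
- by move=> rho' [? [? ?]]; apply: rho_uniq.
- exact: rho_bijective hQ.2.1 hL hpsi hS spec.
Qed.
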